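(* Let $X$ be a countably infinite set. The lattice $\mathrm{Cl}_{loc}(X)$ of local clones on $X$ is not embeddable (as a sublattice, i.e. via an injective map preserving binary meets and joins) into any algebraic lattice with countably many compact elements.
   Context: A clone on $X$ is a set of finitary operations $X^n\to X$ ($n\ge1$) containing all projections $\pi^n_k(x_1,\dots,x_n)=x_k$ and closed under composition. Giving $X$ the discrete topology and $X^{X^n}$ the product topology, a clone is local if for each $n$ its set of $n$-ary operations is closed in $X^{X^n}$; equivalently, an $n$-ary operation $g$ belongs to the clone whenever for every finite $B\subseteq X^n$ some $n$-ary operation of the clone agrees with $g$ on $B$. $\mathrm{Cl}_{loc}(X)$ is the complete lattice of local clones on $X$ ordered by inclusion. An element $a$ of a complete lattice is compact if whenever $a\le\bigvee A$ there is a finite $A'\subseteq A$ with $a\le\bigvee A'$; a complete lattice is algebraic if every element is a join of compact elements. *)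

From mathcomp Require Import all_boot.
From Stdlib Require List.
Set Implicit Arguments. Unset Strict Implicit. Unset Printing Implicit Defensive.

Definition op (X : Type) (n : nat) := ('I_n -> X) -> X.

Definition opset (X : Type) := forall n : nat, op X n -> Prop.

Definition is_clone (X : Type) (C : opset X) : Prop :=
  [/\ (forall f : op X 0, ~ C 0 f),
      (forall n (k : 'I_n), C n (fun x => x k)) &
      (forall m n (f : op X m) (g : 'I_m -> op X n),
          C m f -> (forall i, C n (g i)) -> C n (fun x => f (fun i => g i x)))].

Definition is_local (X : Type) (C : opset X) : Prop :=
  forall n (g : op X n),
    (forall B : list ('I_n -> X),
        exists2 f, C n f & forall x, List.In x B -> f x = g x) ->
    C n g.

Definition local_clone (X : Type) := {C : opset X | is_clone C /\ is_local C}.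

Definition lc_le (X : Type) (C D : local_clone X) : Prop :=
  forall n (f : op X n), proj1_sig C n f -> proj1_sig D n f.

Definition is_glb (T : Type) (le : T -> T -> Prop) (x y m : T) : Prop :=
  [/\ le m x, le m y & forall z, le z x -> le z y -> le z m].

Definition is_lub (T : Type) (le : T -> T -> Prop) (x y j : T) : Prop :=
  [/\ le x j, le y j & forall z, le x z -> le y z -> le j z].

Record complete_lattice := CompleteLattice {
  cl_car :> Type;
  cl_le : cl_car -> cl_car -> Prop;
  cl_refl : forall x, cl_le x x;
  cl_antisym : forall x y, cl_le x y -> cl_le y x -> x = y;
  cl_trans : forall x y z, cl_le x y -> cl_le y z -> cl_le x z;
  cl_sup : (cl_car -> Prop) -> cl_car;
  cl_sup_ub : forall (A : cl_car -> Prop) x, A x -> cl_le x (cl_sup A);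
  cl_sup_least : forall (A : cl_car -> Prop) z,
      (forall x, A x -> cl_le x z) -> cl_le (cl_sup A) z
}.

Definition compact (L : complete_lattice) (a : L) : Prop :=
  forall A : L -> Prop, cl_le a (cl_sup A) ->
    exists l : list L, (forall x, List.In x l -> A x) /\
                       cl_le a (cl_sup (fun x => List.In x l)).

Definition algebraic (L : complete_lattice) : Prop :=
  forall a : L, exists A : L -> Prop,
    (forall c, A c -> compact c) /\ a = cl_sup A.

Definition countably_many_compacts (L : complete_lattice) : Prop :=
  exists h : L -> nat, forall a b : L, compact a -> compact b -> h a = h b -> a = b.

Definition lattice_embedding (X : Type) (L : complete_lattice)
    (e : local_clone X -> L) : Prop :=
  [/\ injective e,
      (forall C D M, is_glb (@lc_le X) C D M -> is_glb (@cl_le L) (e C) (e D) (e M)) &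
      (forall C D J, is_lub (@lc_le X) C D J -> is_lub (@cl_le L) (e C) (e D) (e J))].

From mathcomp Require Import all_boot.
From Stdlib Require Import Classical ClassicalEpsilon FunctionalExtensionality.
Set Implicit Arguments. Unset Strict Implicit. Unset Printing Implicit Defensive.

(* For T : nat -> bool, let C_T be the clone generated by an
   idempotent unary map u_T that collapses a T-dependent set of points onto
   one point.  Every C_T is local and lies strictly above the clone J of
   projections, and C_T /\ C_T' = J whenever T <> T'.  In an algebraic lattice
   each e(C_T) lies above some compact c_T not below e(J); since e preserves
   meets, c_T = c_T' forces T = T'.  This injects the uncountable set
   nat -> bool into the countable set of compacts. *)

Lemma mem_In (T : eqType) (x : T) (s : seq T) : x \in s -> List.In x s.
Proof.
elim: s => //= y s IH; rewrite in_cons => /orP [/eqP ->|/IH]; by [left|right].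
Qed.

Lemma cantor_nat_bool (h : (nat -> bool) -> nat) : ~ injective h.
Proof.
move=> h_inj.
pose D n : bool :=
  if excluded_middle_informative (exists T, h T = n /\ T n = false)
  then true else false.
have D_spec n : D n = true <-> exists T, h T = n /\ T n = false.
  by rewrite /D; case: excluded_middle_informative.
case E: (D (h D)).
- have [T [hT TD]] := (D_spec _).1 E.
  by move: TD; rewrite (h_inj _ _ hT) E.
- by have := (D_spec (h D)).2 (ex_intro _ D (conj erefl E)); rewrite E.
Qed.

Lemma algebraic_separating_compact (L : complete_lattice) (a b : L) :
  algebraic L -> ~ cl_le a b ->
  exists c, [/\ compact c, cl_le c a & ~ cl_le c b].
Proof.
move=> L_alg; have [A [A_compact ->]] := L_alg a; move=> ab.
apply: NNPP => no_c; apply: ab; apply: cl_sup_least => c Ac.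
apply: NNPP => cb; apply: no_c; exists c; split => //; first exact: A_compact.
exact: cl_sup_ub.
Qed.

Section MeetEmbedding.

Variables (P : Type) (le : P -> P -> Prop) (L : complete_lattice) (e : P -> L).
Hypothesis le_refl : forall x, le x x.
Hypothesis e_inj : injective e.
Hypothesis e_meet :
  forall x y m, is_glb le x y m -> is_glb (@cl_le L) (e x) (e y) (e m).

Lemma meet_embedding_strict (a b : P) : le b a -> a <> b -> ~ cl_le (e a) (e b).
Proof.
move=> ba a_neq_b eab; apply: a_neq_b; apply: e_inj.
have [_ eba _] : is_glb (@cl_le L) (e b) (e a) (e b).
  by apply: e_meet; split.
exact: cl_antisym.
Qed.

Lemma meet_embedding_family_countable (I : Type) (bot : P) (C : I -> P) :
  algebraic L -> countably_many_compacts L ->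
  (forall i, le bot (C i)) -> (forall i, C i <> bot) ->
  (forall i j, i <> j -> is_glb le (C i) (C j) bot) ->
  exists h : I -> nat, injective h.
Proof.
move=> L_alg [hc hc_inj] bot_le C_neq C_meet.
have sep i : exists c, [/\ compact c, cl_le c (e (C i)) & ~ cl_le c (e bot)].
  exact/algebraic_separating_compact/meet_embedding_strict.
pose c i := proj1_sig (constructive_indefinite_description _ (sep i)).
have c_spec i : [/\ compact (c i), cl_le (c i) (e (C i)) & ~ cl_le (c i) (e bot)].
  exact: proj2_sig (constructive_indefinite_description _ (sep i)).
exists (fun i => hc (c i)) => i j hij; apply: NNPP => i_neq_j.
have [ci_compact ci_le ci_nle] := c_spec i.
have [cj_compact cj_le _] := c_spec j.
have cij := hc_inj _ _ ci_compact cj_compact hij.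
have [_ _ glb] := e_meet (C_meet _ _ i_neq_j).
by apply: ci_nle; apply: glb => //; rewrite cij.
Qed.

End MeetEmbedding.

(* A finite family of functions is closed in the topology of pointwise
   convergence on a discrete codomain. *)
Lemma finite_family_agree (A B : Type) (F : finType) (f : F -> A -> B) (g : A -> B) :
  (forall D : list A, exists i, forall x, List.In x D -> f i x = g x) ->
  exists i, forall x, f i x = g x.
Proof.
move=> agree_finite; apply: NNPP => no_i.
have miss i : exists x, f i x <> g x.
  by apply: not_all_ex_not => fi_g; apply: no_i; exists i.
pose w i := proj1_sig (constructive_indefinite_description _ (miss i)).
have w_spec i : f i (w i) <> g (w i).
  exact: proj2_sig (constructive_indefinite_description _ (miss i)).
have [i fi_g] := agree_finite (List.map w (enum F)).
by apply: (w_spec i); apply/fi_g/List.in_map/mem_In; rewrite mem_enum.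
Qed.

Section UnaryClone.

Variable X : Type.

Definition unary_clone (u : X -> X) : opset X := fun n h =>
  (exists k, forall x, h x = x k) \/ (exists k, forall x, h x = u (x k)).

Lemma unary_clone_is_clone (u : X -> X) : idempotent_fun u -> is_clone (unary_clone u).
Proof.
move=> u_idem; split.
- by move=> f [[[] //]|[[] //]].
- by move=> n k; left; exists k.
- move=> m n f g [[k fk]|[k fk]] g_in.
  + case: (g_in k) => [[j gj]|[j gj]]; [left|right]; exists j => x;
      by rewrite fk gj.
  + case: (g_in k) => [[j gj]|[j gj]]; right; exists j => x;
      rewrite fk gj //; exact: u_idem.
Qed.

Lemma unary_clone_is_local (u : X -> X) : is_local (unary_clone u).
Proof.
move=> n g g_approx.
pose f (bk : bool * 'I_n) (x : 'I_n -> X) := if bk.1 then u (x bk.2) else x bk.2.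
have [[[] k] fg] : exists bk, forall x, f bk x = g x.
  apply: finite_family_agree => D.
  have [h [[k hk]|[k hk]] hg] := g_approx D; [exists (false, k)|exists (true, k)];
    by move=> x xD; rewrite -hg // hk.
- by right; exists k => x; rewrite -fg.
- by left; exists k => x; rewrite -fg.
Qed.

Definition unary_local_clone (u : X -> X) (u_idem : idempotent_fun u) : local_clone X :=
  exist _ (unary_clone u) (conj (unary_clone_is_clone u_idem) (@unary_clone_is_local u)).

Definition projection_clone : local_clone X := @unary_local_clone id (fun=> erefl).

Lemma projection_clone_le (u : X -> X) (u_idem : idempotent_fun u) :
  lc_le projection_clone (unary_local_clone u_idem).
Proof. by move=> n f [[k fk]|[k fk]]; left; exists k. Qed.

Lemma unary_clone_neq_projection (u : X -> X) (u_idem : idempotent_fun u) :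
  (exists a, u a <> a) -> unary_local_clone u_idem <> projection_clone.
Proof.
move=> [a ua] u_proj.
have : proj1_sig (unary_local_clone u_idem) 1 (fun x => u (x ord0)).
  by right; exists ord0.
by rewrite u_proj => -[[k uk]|[k uk]]; apply: ua; apply: (uk (fun=> a)).
Qed.

Lemma unary_clone_meet (u v : X -> X) (u_idem : idempotent_fun u)
    (v_idem : idempotent_fun v) :
  (exists a, u a <> v a) ->
  is_glb (@lc_le X) (unary_local_clone u_idem) (unary_local_clone v_idem)
         projection_clone.
Proof.
move=> [a uva]; split; try exact: projection_clone_le.
move=> Z Zu Zv n f Zf.
case: (Zu _ _ Zf) => [|[k fk]]; first by left.
case: (Zv _ _ Zf) => [|[j fj]]; first by left.
by case: uva; rewrite -(fk (fun=> a)) (fj (fun=> a)).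
Qed.

End UnaryClone.

(* Collapsing 1 as well makes every [collapse T] differ from the identity. *)
Definition collapse (T : nat -> bool) (n : nat) : nat :=
  match n with 0 | 1 => 0 | k.+2 => if T k then 0 else n end.

Lemma collapse_idem (T : nat -> bool) : idempotent_fun (collapse T).
Proof. by case=> [|[|k]] //=; case Tk: (T k) => //=; rewrite Tk. Qed.

Lemma collapse_separates (T T' : nat -> bool) :
  T <> T' -> exists n, collapse T n <> collapse T' n.
Proof.
move=> T_neq; have [m Tm] : exists m, T m <> T' m.
  apply: NNPP => same; apply/T_neq/functional_extensionality => m.
  by apply: NNPP => Tm; apply: same; exists m.
by exists m.+2 => /=; move: Tm; case: (T m); case: (T' m).
Qed.

Lemma conjugate_idempotent (X : Type) (phi : X -> nat) (psi : nat -> X)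
    (f : nat -> nat) :
  cancel psi phi -> idempotent_fun f -> idempotent_fun (psi \o f \o phi).
Proof. by move=> psiK f_idem x /=; rewrite psiK; congr psi; apply: f_idem. Qed.

Theorem corollary2p12 (X : Type) (hX : exists f : X -> nat, bijective f)
    (L : complete_lattice) :
  algebraic L -> countably_many_compacts L ->
  ~ exists e : local_clone X -> L, lattice_embedding e.
Proof.
case: hX => phi [psi _ psiK] L_alg L_count [e [e_inj e_meet _]].
have psi_inj : injective psi := can_inj psiK.
pose u T := psi \o collapse T \o phi.
have u_idem T : idempotent_fun (u T) := conjugate_idempotent psiK (collapse_idem T).
pose C T := unary_local_clone (u_idem T).
have [h h_inj] : exists h : (nat -> bool) -> nat, injective h.
  apply: (@meet_embedding_family_countable _ _ _ _ _ e_inj e_meet _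
            (projection_clone X) C) => //.
  - by move=> D n f.
  - by move=> T; apply: projection_clone_le.
  - move=> T; apply: unary_clone_neq_projection; exists (psi 1).
    by rewrite /u /= psiK => /psi_inj.
  - move=> T T' /collapse_separates [n Tn]; apply: unary_clone_meet.
    by exists (psi n); rewrite /u /= psiK => /psi_inj.
exact: cantor_nat_bool h_inj.
Qed.
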